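(* Let $u_1,\ldots,u_N\ge 2$ be positive integers, and suppose there is an index set $\Gamma\subset\{1,\ldots,N-1\}$ such that $\prod_{k\in\Gamma}u_k=u_N\cdot\prod_{k\in\Gamma^c}u_k$, where $\Gamma^c=\{1,\ldots,N-1\}\setminus\Gamma$. Set $u_{\max}:=\max\{u_1,\ldots,u_{N-1}\}$. Let ${\bm x}=(x(0),\ldots,x(N-1))\in\mathbb{C}^N$ be the vector with $x(0)=u_{\max}^{N-1}$ whose $Z$-transform is $$X(z):=\sum_{k=0}^{N-1}x(k)z^{-k}=x(0)z^{-(N-1)}(z-\beta_1)\cdots(z-\beta_{N-1}),$$ where $\beta_k=-u_k$ if $k\in\Gamma$ and $\beta_k=-1/u_k$ if $k\in\Gamma^c$. Let ${\bm x}_m\in\mathbb{C}^N$ satisfy $\|{\bm x}_m-{\bm x}\|\le u_{\max}^{-2N}$ (Euclidean norm), and let $X_m(z)=\sum_{k=0}^{N-1}x_m(k)z^{-k}$ be its $Z$-transform. Then for each $k\in\{1,\ldots,N-1\}$: (i) if $1/\beta_k$ is not a zero of $X(z)$, then $|X_m(1/\beta_k)|\ge|X_m(\beta_k)|+c_0$ with $c_0:=1-2u_{\max}^{-N}$; (ii) if $1/\beta_k$ is a zero of $X(z)$, then $\max\{|X_m(\beta_k)|,|X_m(1/\beta_k)|\}\le u_{\max}^{-N}$. *)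

From mathcomp Require Import all_boot all_order all_algebra.
Set Implicit Arguments. Unset Strict Implicit. Unset Printing Implicit Defensive.
Import Order.TTheory GRing.Theory Num.Theory.
Local Open Scope ring_scope.

(* Complex numbers: any numeric closed field C (e.g. algC or R[i]),
   with its norm `|z| (valued in C). Vectors of C^N are nat -> C,
   of which only the entries 0..N-1 are used. *)

Definition Ztr (C : numClosedFieldType) (N : nat) (x : nat -> C) (z : C) : C :=
  \sum_(k < N) x k * z ^- k.

Definition enorm (C : numClosedFieldType) (N : nat) (x : nat -> C) : C :=
  sqrtC (\sum_(k < N) `|x k| ^+ 2).

Definition umax (N : nat) (u : nat -> nat) : nat := \max_(1 <= k < N) u k.

Definition beta (C : numClosedFieldType) (u : nat -> nat) (Gam : pred nat) (k : nat) : C :=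
  if Gam k then - (u k)%:R else - ((u k)%:R)^-1.

From mathcomp Require Import all_boot all_order all_algebra.
From mathcomp Require Import zify ring.
Import Order.TTheory GRing.Theory Num.Theory.
Local Open Scope ring_scope.

(* With U := u_max, every |beta_k| and |1/beta_k| is at most U, so a vector
   perturbation of norm U^(-2N) moves X by at most U^(-2N) (1 + U + ... + U^(N-1))
   <= U^(-N) at beta_k and 1/beta_k.  Now X(beta_k) = 0, and by the factorisation
   X(1/beta_k) = U^(N-1) prod_j (1 - beta_k beta_j); each factor is 1 - p/q
   for naturals with q <= U |p - q| unless it vanishes, so it has modulus >= 1/U.
   So either |X(1/beta_k)| >= 1, giving (i), or X(1/beta_k) = 0, giving (ii). *)

Lemma sum_expn_lt (m k : nat) : (1 < m)%N -> (\sum_(i < k) m ^ i < m ^ k)%N.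
Proof.
move=> m_gt1; have: (\sum_(i < k) m ^ i <= (m ^ k).-1)%N.
  by rewrite predn_exp leq_pmull // -ltnS prednK // ltnW.
by rewrite -ltnS prednK // expn_gt0 ltnW.
Qed.

Lemma prod_invB_scale (K : fieldType) (b : K) (F : nat -> K) (m n : nat) : b != 0 ->
  b ^+ (n - m) * \prod_(m <= j < n) (b^-1 - F j) = \prod_(m <= j < n) (1 - b * F j).
Proof.
move=> b_neq0; rewrite -prodr_const_nat -big_split /=.
by apply: eq_bigr => j _; rewrite mulrBr mulfV.
Qed.

Lemma norm_prod_ge1 (R : numFieldType) (r : R) (F : nat -> R) (m n : nat) : 0 < r ->
  (forall j, (m <= j < n)%N -> r^-1 <= `|F j|) ->
  1 <= `|r ^+ (n - m) * \prod_(m <= j < n) F j|.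
Proof.
move=> r_gt0 F_ge; rewrite normrM normr_prod normrX gtr0_norm //.
apply: le_trans (_ : r ^+ (n - m) * \prod_(m <= j < n) r^-1 <= _).
  by rewrite prodr_const_nat -exprMn mulfV ?expr1n // gt_eqF.
rewrite ler_pM2l ?exprn_gt0 // !big_seq.
apply: ler_prod => j; rewrite mem_index_iota => /F_ge ->.
by rewrite invr_ge0 ltW.
Qed.

Section ZTransform.
Variable C : numClosedFieldType.
Implicit Types (x y : nat -> C) (z : C).

Lemma enorm_ge0 N y : 0 <= enorm N y.
Proof. by rewrite sqrtC_ge0 sumr_ge0 // => k _; rewrite exprn_ge0. Qed.

Lemma norm_le_enorm N y (i : 'I_N) : `|y i| <= enorm N y.
Proof.
rewrite -(sqrCK (normr_ge0 (y i))) ler_sqrtC ?nnegrE ?exprn_ge0 //.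
- by rewrite (bigD1 i) //= lerDl sumr_ge0 // => k _; rewrite exprn_ge0.
- by rewrite sumr_ge0 // => k _; rewrite exprn_ge0.
Qed.

Lemma ZtrB N x y z : Ztr N x z - Ztr N y z = Ztr N (fun k => x k - y k) z.
Proof. by rewrite /Ztr -sumrB; apply: eq_bigr => k _; rewrite mulrBl. Qed.

Lemma norm_Ztr_le N y z (r : C) : `|z^-1| <= r ->
  `|Ztr N y z| <= enorm N y * \sum_(k < N) r ^+ k.
Proof.
move=> zr; rewrite mulr_sumr; apply: le_trans (ler_norm_sum _ _ _) _.
apply: ler_sum => k _; rewrite normrM -exprVn normrX.
apply: ler_pM; rewrite ?normr_ge0 ?exprn_ge0 ?norm_le_enorm //.
by rewrite lerXn2r ?nnegrE ?normr_ge0 ?(le_trans (normr_ge0 _) zr).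
Qed.

Lemma norm_ZtrB_le N (U : nat) x xm z : (1 < U)%N -> `|z^-1| <= U%:R ->
  enorm N (fun k => xm k - x k) <= U%:R ^- (2 * N) ->
  `|Ztr N xm z - Ztr N x z| <= U%:R ^- N.
Proof.
move=> U_gt1 zU xm_near; rewrite ZtrB.
apply: le_trans (norm_Ztr_le _ _ _ _ zU) _.
have U_neq0 : (U%:R : C) != 0 by rewrite pnatr_eq0 gtn_eqF // ltnW.
have -> : U%:R ^- N = U%:R ^- (2 * N) * (U ^ N)%:R :> C.
  by rewrite natrX mul2n -addnn exprD invfM -mulrA mulVf ?mulr1 // expf_neq0.
apply: ler_pM => //; first exact: enorm_ge0.
  by rewrite sumr_ge0 // => k _; rewrite exprn_ge0 ?ler0n.
under eq_bigr do rewrite -natrX.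
by rewrite -natr_sum ler_nat ltnW // sum_expn_lt.
Qed.

End ZTransform.

Section Beta.
Variables (C : numClosedFieldType) (u : nat -> nat) (Gam : pred nat) (U : nat).
Local Notation beta := (beta C u Gam).

Lemma beta_neq0 k : (0 < u k)%N -> beta k != 0.
Proof.
by move=> uk_gt0; rewrite /beta; case: (Gam k); rewrite oppr_eq0 ?invr_eq0 pnatr_eq0 -lt0n.
Qed.

Lemma norm_beta_le k : (0 < u k <= U)%N -> `|beta k| <= U%:R /\ `|(beta k)^-1| <= U%:R.
Proof.
case/andP=> uk_gt0 ukU; have le1U : (1 <= U%:R :> C) by rewrite ler1n (leq_trans uk_gt0).
have invU : ((u k)%:R^-1 <= U%:R :> C).
  by rewrite (le_trans _ le1U) // invf_le1 ?ltr0n ?ler1n.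
by rewrite /beta; case: (Gam k); rewrite ?invrN ?invrK !normrN ?normfV normr_nat ler_nat.
Qed.

Lemma norm_1subn_frac_ge (m n : nat) : (0 < n)%N -> (0 < U)%N ->
  (n <= `|m - n| * U)%N -> U%:R^-1 <= `|1 - m%:R / n%:R : C|.
Proof.
move=> n_gt0 U_gt0 nU; have n_neq0 : (n%:R : C) != 0 by rewrite pnatr_eq0 -lt0n.
have -> : 1 - m%:R / n%:R = (n%:R - m%:R) / n%:R :> C by rewrite mulrBl divff.
rewrite normrM normfV normr_nat.
have -> : `|n%:R - m%:R : C| = `|n - m|%N%:R by rewrite natr_absz intr_norm rmorphB.
rewrite ler_pdivlMr ?ltr0n // mulrC.
by rewrite ler_pdivrMr ?ltr0n // -natrM ler_nat distnC.
Qed.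

Lemma norm_1subMbeta_ge k j : (2 <= u k <= U)%N -> (2 <= u j <= U)%N ->
  1 - beta k * beta j != 0 -> U%:R^-1 <= `|1 - beta k * beta j|.
Proof.
rewrite /beta; move: (u k) (u j) => a b a_range b_range.
have a_neq0 : (a%:R : C) != 0 by rewrite pnatr_eq0; lia.
have b_neq0 : (b%:R : C) != 0 by rewrite pnatr_eq0; lia.
case: (Gam k); case: (Gam j); rewrite mulrNN.
- move=> _; rewrite -natrM -[X in 1 - X]divr1.
  by apply: (norm_1subn_frac_ge _ 1); [|lia|nia].
- move=> /eqP neq1; have a_neq_b : a <> b.
    by move=> ab; apply: neq1; rewrite ab divff // subrr.
  by apply: norm_1subn_frac_ge; [lia|lia|nia].
- rewrite mulrC => /eqP neq1; have b_neq_a : b <> a.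
    by move=> ba; apply: neq1; rewrite ba divff // subrr.
  by apply: norm_1subn_frac_ge; [lia|lia|nia].
- move=> _; rewrite -invfM -natrM -[X in 1 - X]div1r.
  by apply: (norm_1subn_frac_ge 1); [lia|lia|nia].
Qed.

End Beta.

Lemma leq_umax N u k : (1 <= k < N)%N -> (u k <= umax N u)%N.
Proof. by move=> kN; apply: (@leq_bigmax_seq _ _ xpredT); rewrite ?mem_index_iota. Qed.

Lemma norm_Ztr_inv_beta_ge1 [C : numClosedFieldType] [N u Gam] [x : nat -> C] [k] :
  (forall j, (1 <= j < N)%N -> (2 <= u j)%N) ->
  x 0%N = (umax N u)%:R ^+ N.-1 ->
  (forall z : C, z != 0 ->
     Ztr N x z = x 0%N * z ^- N.-1 * \prod_(1 <= j < N) (z - beta C u Gam j)) ->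
  (1 <= k < N)%N -> Ztr N x (beta C u Gam k)^-1 != 0 ->
  1 <= `|Ztr N x (beta C u Gam k)^-1|.
Proof.
move=> u_ge2 x0E XE kN; set U := umax N u; set b := beta C u Gam k.
have u_range j : (1 <= j < N)%N -> (2 <= u j <= U)%N.
  by move=> jN; rewrite u_ge2 ?leq_umax.
have b_neq0 : b != 0 by rewrite beta_neq0 // ltnW // u_ge2.
have XbinvE : Ztr N x b^-1 = U%:R ^+ (N - 1) * \prod_(1 <= j < N) (1 - b * beta C u Gam j).
  by rewrite XE ?invr_neq0 // exprVn invrK x0E -subn1 -mulrA prod_invB_scale.
rewrite XbinvE mulf_eq0 negb_or prodf_seq_neq0 => /andP[_ /allP factors_neq0].
apply: norm_prod_ge1 => [|j jN]; first by rewrite ltr0n; have := u_range k kN; lia.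
by apply: norm_1subMbeta_ge; rewrite ?u_range //; apply: factors_neq0; rewrite mem_index_iota.
Qed.

Lemma norm_gap_perturb (R : numDomainType) (p q q' d : R) :
  `|p| <= d -> `|q' - q| <= d -> 1 <= `|q| -> `|p| + (1 - 2 * d) <= `|q'|.
Proof.
move=> p_le qq'_le q_ge1.
have q'_ge : 1 - d <= `|q'|.
  rewrite lerBlDl (le_trans q_ge1) // addrC -lerBlDl.
  by rewrite (le_trans (lerB_dist _ _)) // distrC.
apply: le_trans q'_ge; rewrite [1 - d](_ : _ = d + (1 - 2 * d)) ?lerD2r //.
by ring.
Qed.

Theorem lemma3p1 (C : numClosedFieldType) (N : nat) (u : nat -> nat)
  (Gam : pred nat) (x xm : nat -> C) :
  (forall k, (1 <= k <= N)%N -> (2 <= u k)%N) ->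
  (forall k, Gam k -> (1 <= k < N)%N) ->
  (\prod_(1 <= k < N | Gam k) u k = u N * \prod_(1 <= k < N | ~~ Gam k) u k)%N ->
  x 0%N = (umax N u)%:R ^+ (N.-1) ->
  (forall z : C, z != 0 ->
     Ztr N x z = x 0%N * z ^- (N.-1) * \prod_(1 <= k < N) (z - beta C u Gam k)) ->
  enorm N (fun k => xm k - x k) <= (umax N u)%:R ^- (2 * N) ->
  forall k, (1 <= k < N)%N ->
    (Ztr N x (beta C u Gam k)^-1 != 0 ->
       `|Ztr N xm (beta C u Gam k)^-1| >=
         `|Ztr N xm (beta C u Gam k)| + (1 - 2 * (umax N u)%:R ^- N))
    /\
    (Ztr N x (beta C u Gam k)^-1 = 0 ->
       Num.max `|Ztr N xm (beta C u Gam k)| `|Ztr N xm (beta C u Gam k)^-1|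
         <= (umax N u)%:R ^- N).
Proof.
move=> u_ge2 _ _ x0E XE xm_near k kN.
have u_ge2' j : (1 <= j < N)%N -> (2 <= u j)%N by move=> jN; apply: u_ge2; lia.
set U := umax N u; set b := beta C u Gam k; set d := U%:R ^- N.
have uk_range : (2 <= u k <= U)%N by rewrite u_ge2' ?leq_umax.
have U_gt1 : (1 < U)%N by move: uk_range; lia.
have [b_le binv_le] : `|b| <= U%:R /\ `|b^-1| <= U%:R.
  by apply: norm_beta_le; move: uk_range; lia.
have Xb0 : Ztr N x b = 0.
  rewrite XE ?beta_neq0 ?(bigD1_seq k) ?mem_index_iota ?iota_uniq //=.
    by rewrite -/b subrr mul0r mulr0.
  by move: uk_range; lia.
have Xm_b : `|Ztr N xm b| <= d.
  by rewrite -[Ztr N xm b]subr0 -Xb0 norm_ZtrB_le.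
have Xm_binv : `|Ztr N xm b^-1 - Ztr N x b^-1| <= d.
  by rewrite norm_ZtrB_le ?invrK.
split => [X_binv_neq0 | X_binv0].
  apply: norm_gap_perturb Xm_b Xm_binv _.
  exact: norm_Ztr_inv_beta_ge1 u_ge2' x0E XE kN X_binv_neq0.
rewrite X_binv0 subr0 in Xm_binv.
by rewrite /Order.max; case: ifP.
Qed.
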